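(* Let $m\ge1$, $b_1,\dots,b_m>0$, $\sigma_1,\dots,\sigma_m\ge0$, and $\phi(\lambda)=\frac12\lambda^2-\sum_{j=1}^mb_j\sqrt{\lambda^2+\sigma_j}$ for $\lambda\ge0$. Then: (1) $\phi$ has at most one critical point $\lambda_0\in(0,\infty)$; if it exists, $\phi'(\lambda)>0$ for $\lambda>\lambda_0$ and $\phi'(\lambda)<0$ for $0<\lambda<\lambda_0$, $\phi''(\lambda)>0$ for $\lambda>\lambda_0$, and $\phi''$ has at most one zero in $(0,\lambda_0)$. If no such $\lambda_0$ exists, then $\phi''(\lambda)\ge0$ for all $\lambda\ge0$. (2) $\bigl(\phi''(\lambda)/\phi'(\lambda)^3\bigr)'\le0$ for all $\lambda\ne\lambda_0$ (i.e. at all $\lambda>0$ where $\phi'(\lambda)\ne0$). (3) If $\lambda_0>0$ exists, then $\phi'(\lambda)=\lambda\int_{\lambda_0}^{\lambda}\sum_{j=1}^m\frac{b_js}{(s^2+\sigma_j)^{3/2}}\,ds$ for all $\lambda>0$; if it does not exist, then $\phi'(\lambda)\ge\lambda\int_0^\lambda\sum_{j=1}^m\frac{b_js}{(s^2+\sigma_j)^{3/2}}\,ds$ for all $\lambda>0$. *)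

From Stdlib Require Import Reals.
From Coquelicot Require Import Coquelicot.
Open Scope R_scope.

(* sumR n f = f 0 + f 1 + ... + f (n-1)  (indices j = 0..n-1 stand for 1..m) *)
Fixpoint sumR (n : nat) (f : nat -> R) : R :=
  match n with
  | O => 0
  | S k => sumR k f + f k
  end.

Definition phi (m : nat) (b sigma : nat -> R) (x : R) : R :=
  / 2 * x ^ 2 - sumR m (fun j => b j * sqrt (x ^ 2 + sigma j)).

Definition phi1 (m : nat) (b sigma : nat -> R) : R -> R :=
  Derive (phi m b sigma).
Definition phi2 (m : nat) (b sigma : nat -> R) : R -> R :=
  Derive (phi1 m b sigma).

Definition integrand (m : nat) (b sigma : nat -> R) (s : R) : R :=
  sumR m (fun j => b j * s / (sqrt (s ^ 2 + sigma j)) ^ 3).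

(* Write [phi'(x) = x (1 - G x)] with [G x = sum_j b_j / r_j], [r_j = sqrt (x^2 + sigma_j)]; [G] is
   strictly decreasing on [(0, oo)] and [-G'] is the integrand.  Hence [lambda_0] is the unique
   solution of [G = 1]; if there is none then [G < 1] on [(0, oo)] (intermediate value theorem, as
   [G -> 0] at infinity), so every [sigma_j > 0] and [G 0 <= 1] by continuity.  Parts (1) and (3)
   follow from [phi'' = 1 - G + x (-G')] and [int_a^c (-G') = G a - G c].
   For (2), [(phi''/phi'^3)' = (phi''' phi' - 3 phi''^2) / phi'^4].  With
   [S1 = sum_j b_j sigma_j / r_j^3] and [S2 = sum_j b_j sigma_j^2 / r_j^5] one has [phi'' = 1 - S1],
   [x phi''' = 3 (S1 - S2)], [S2 <= S1 <= G] and, by Cauchy-Schwarz, [S1^2 <= G S2]; together these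
   give [(S1 - S2) (1 - G) <= (1 - S1)^2]. *)

From Stdlib Require Import Reals Lra Lia.
From Coquelicot Require Import Coquelicot.
Open Scope R_scope.

Section Sums.
Implicit Types (n : nat) (f g : nat -> R).

Lemma sumR_ext n f g : (forall j, (j < n)%nat -> f j = g j) -> sumR n f = sumR n g.
Proof.
  induction n as [|k IH]; simpl; intros H; [easy|].
  rewrite IH by (intros; apply H; lia). now rewrite H by lia.
Qed.

Lemma sumR_plus n f g : sumR n (fun j => f j + g j) = sumR n f + sumR n g.
Proof. induction n as [|k IH]; simpl; [ring|]. rewrite IH. ring. Qed.

Lemma sumR_scal n c f : sumR n (fun j => c * f j) = c * sumR n f.
Proof. induction n as [|k IH]; simpl; [ring|]. rewrite IH. ring. Qed.

Lemma sumR_opp n f : sumR n (fun j => - f j) = - sumR n f.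
Proof. induction n as [|k IH]; simpl; [ring|]. rewrite IH. ring. Qed.

Lemma sumR_const0 n : sumR n (fun _ => 0) = 0.
Proof. induction n as [|k IH]; simpl; [easy|]. rewrite IH. ring. Qed.

Lemma sumR_le n f g : (forall j, (j < n)%nat -> f j <= g j) -> sumR n f <= sumR n g.
Proof.
  induction n as [|k IH]; simpl; intros H; [lra|].
  assert (sumR k f <= sumR k g) by (apply IH; intros; apply H; lia).
  assert (f k <= g k) by (apply H; lia). lra.
Qed.

Lemma sumR_lt n f g : (1 <= n)%nat -> (forall j, (j < n)%nat -> f j < g j) -> sumR n f < sumR n g.
Proof.
  destruct n as [|k]; simpl; intros Hn H; [lia|].
  assert (sumR k f <= sumR k g) by (apply sumR_le; intros; apply Rlt_le, H; lia).
  assert (f k < g k) by (apply H; lia). lra.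
Qed.

Lemma sumR_nonneg n f : (forall j, (j < n)%nat -> 0 <= f j) -> 0 <= sumR n f.
Proof. intros H. rewrite <- (sumR_const0 n). now apply sumR_le. Qed.

Lemma sumR_ge_term n f i : (i < n)%nat -> (forall j, (j < n)%nat -> 0 <= f j) -> f i <= sumR n f.
Proof.
  induction n as [|k IH]; simpl; intros Hi H; [lia|].
  assert (0 <= f k) by (apply H; lia).
  destruct (Nat.eq_dec i k) as [->|Hik].
  - assert (0 <= sumR k f) by (apply sumR_nonneg; intros; apply H; lia). lra.
  - assert (f i <= sumR k f) by (apply IH; [lia | intros; apply H; lia]). lra.
Qed.

Lemma sumR_lt_pos n f g :
  (forall j, (j < n)%nat -> 0 <= g j) ->
  (forall j, (j < n)%nat -> f j <= g j) ->
  (forall j, (j < n)%nat -> 0 < g j -> f j < g j) ->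
  0 < sumR n g -> sumR n f < sumR n g.
Proof.
  induction n as [|k IH]; simpl; intros Hg Hle Hlt Hpos; [lra|].
  assert (sumR k f <= sumR k g) by (apply sumR_le; intros; apply Hle; lia).
  destruct (Rle_lt_or_eq_dec 0 (g k)) as [Hk|Hk]; [apply Hg; lia | |].
  - assert (f k < g k) by (apply Hlt; [lia | easy]). lra.
  - assert (f k <= g k) by (apply Hle; lia).
    assert (sumR k f < sumR k g).
    { apply IH; [intros j Hj; apply Hg | intros j Hj; apply Hle | intros j Hj; apply Hlt | lra];
        lia. }
    lra.
Qed.

Lemma is_derive_sumR n (F : nat -> R -> R) (dF : nat -> R) x :
  (forall j, (j < n)%nat -> is_derive (F j) x (dF j)) ->
  is_derive (fun y => sumR n (fun j => F j y)) x (sumR n dF).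
Proof.
  induction n as [|k IH]; simpl; intros H.
  - apply (is_derive_const 0).
  - apply (is_derive_plus (fun y => sumR k (fun j => F j y)) (F k)).
    + apply IH; intros; apply H; lia.
    + apply H; lia.
Qed.

Lemma continuous_sumR n (F : nat -> R -> R) x :
  (forall j, (j < n)%nat -> continuous (F j) x) ->
  continuous (fun y => sumR n (fun j => F j y)) x.
Proof.
  induction n as [|k IH]; simpl; intros H.
  - apply continuous_const.
  - apply (continuous_plus (fun y => sumR k (fun j => F j y)) (F k)).
    + apply IH; intros; apply H; lia.
    + apply H; lia.
Qed.

End Sums.

Lemma Rle_of_sub_eq_div a c N d : 0 <= N -> 0 < d -> c - a = N / d -> a <= c.
Proof.
  intros HN Hd E. assert (0 <= N / d) by (apply Rdiv_le_0_compat; lra). lra.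
Qed.

Lemma Rdiv_le_contravar a p q : 0 <= a -> 0 < p -> p <= q -> a / q <= a / p.
Proof.
  intros Ha Hp Hpq. apply Rmult_le_compat_l; [easy|]. now apply Rinv_le_contravar.
Qed.

Lemma Rdiv_lt_contravar a p q : 0 < a -> 0 < p -> p < q -> a / q < a / p.
Proof.
  intros Ha Hp Hpq. apply Rmult_lt_compat_l; [easy|]. apply Rinv_lt_contravar; nra.
Qed.

Lemma continuous_le_at_right (f : R -> R) x c :
  continuous f x -> (forall y, x < y -> f y <= c) -> f x <= c.
Proof.
  intros Hf Hc.
  apply (filterlim_le (F := at_right x) f (fun _ => c) (f x) c).
  - exists (mkposreal 1 Rlt_0_1). intros y _ Hy. now apply Hc.
  - apply (filterlim_filter_le_1 (F := locally x)); [|exact Hf].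
    intros P [e He]. exists e. intros y Hy _. now apply He.
  - apply filterlim_const.
Qed.

(* With [g' = f] and [f' = d], [(f / g^3)' = (d g - 3 f^2) / g^4]. *)
Lemma Derive_div_cube_nonpos (f g : R -> R) d x :
  is_derive g x (f x) -> is_derive f x d -> g x <> 0 -> d * g x <= 3 * f x ^ 2 ->
  Derive (fun y => f y / g y ^ 3) x <= 0.
Proof.
  intros Hg Hf Hg0 Hle.
  assert (Hg3 : g x ^ 3 <> 0) by now apply pow_nonzero.
  rewrite (is_derive_unique _ _ _ (is_derive_div f (fun y => g y ^ 3) x _ _ Hf
             (is_derive_pow g 3 x _ Hg) Hg3)).
  simpl pred. replace (INR 3) with 3 by (simpl; ring).
  replace ((d * g x ^ 3 - f x * (3 * f x * g x ^ 2)) / (g x ^ 3) ^ 2)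
    with (- ((3 * f x ^ 2 - d * g x) / g x ^ 4)) by (field; exact Hg0).
  assert (0 <= (3 * f x ^ 2 - d * g x) / g x ^ 4); [|lra].
  apply Rdiv_le_0_compat; [lra|].
  replace (g x ^ 4) with ((g x ^ 2) ^ 2) by ring. now apply pow2_gt_0, pow_nonzero.
Qed.

Lemma sq_le_of_quadratic_bound g s q :
  0 < g -> (forall k, 2 * k * s - k ^ 2 * g <= q) -> s ^ 2 <= g * q.
Proof.
  intros Hg Hq. specialize (Hq (s / g)).
  replace (2 * (s / g) * s - (s / g) ^ 2 * g) with (s ^ 2 / g) in Hq by (field; lra).
  apply (Rmult_le_compat_l g) in Hq; [|lra].
  replace (g * (s ^ 2 / g)) with (s ^ 2) in Hq by (field; lra). exact Hq.
Qed.

Lemma sub_mul_one_sub_le_sq g s q :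
  0 < g -> 0 <= s <= g -> q <= s -> s ^ 2 <= g * q -> (s - q) * (1 - g) <= (1 - s) ^ 2.
Proof.
  intros Hg Hs Hqs Hsq.
  destruct (Rle_lt_dec 1 g) as [Hg1|Hg1].
  { assert ((s - q) * (1 - g) <= 0) by (apply Rmult_le_0_l; lra).
    assert (0 <= (1 - s) ^ 2) by apply pow2_ge_0. lra. }
  apply (Rmult_le_reg_l g); [easy|].
  assert (g * (s - q) * (1 - g) <= (g * s - s ^ 2) * (1 - g))
    by (apply Rmult_le_compat_r; nra).
  assert (0 <= (g - s) * (2 * g - g ^ 2 - s)) by (apply Rmult_le_pos; nra).
  assert (0 <= g * (1 - g) ^ 2) by (apply Rmult_le_pos; [lra | apply pow2_ge_0]).
  assert (g * (1 - s) ^ 2 - (g * s - s ^ 2) * (1 - g)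
          = g * (1 - g) ^ 2 + (g - s) * (2 * g - g ^ 2 - s)) by ring.
  lra.
Qed.

Ltac abstract_root x s :=
  let r := fresh "r" in
  assert (0 < sqrt (x ^ 2 + s)) by (apply sqrt_lt_R0; lra);
  assert (sqrt (x ^ 2 + s) ^ 2 = x ^ 2 + s) by (apply pow2_sqrt; lra);
  set (r := sqrt (x ^ 2 + s)) in *; clearbody r.

Ltac solve_root_derive x s :=
  replace (x * (x * 1)) with (x ^ 2) by ring; abstract_root x s;
  repeat split; try lra; try field; apply Rgt_not_eq; simpl; repeat apply Rmult_lt_0_compat; lra.

Section RootTerms.
Variables (c s x : R).
Hypothesis hxs : 0 < x ^ 2 + s.

Lemma is_derive_scal_root :
  is_derive (fun y => c * sqrt (y ^ 2 + s)) x (x * (c / sqrt (x ^ 2 + s))).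
Proof. auto_derive; solve_root_derive x s. Qed.

Lemma is_derive_inv_root :
  is_derive (fun y => c / sqrt (y ^ 2 + s)) x (- (c * x / sqrt (x ^ 2 + s) ^ 3)).
Proof. auto_derive; solve_root_derive x s. Qed.

Lemma is_derive_sigma_root3 :
  is_derive (fun y => c * s / sqrt (y ^ 2 + s) ^ 3) x (- (3 * c * s * x / sqrt (x ^ 2 + s) ^ 5)).
Proof. auto_derive; solve_root_derive x s. Qed.

Lemma ex_derive_root3 : ex_derive (fun y => c * y / sqrt (y ^ 2 + s) ^ 3) x.
Proof. auto_derive; solve_root_derive x s. Qed.

Lemma inv_root_sub_root3 :
  c / sqrt (x ^ 2 + s) - x * (c * x / sqrt (x ^ 2 + s) ^ 3) = c * s / sqrt (x ^ 2 + s) ^ 3.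
Proof. abstract_root x s. replace s with (r ^ 2 - x ^ 2) by lra. field. lra. Qed.

Lemma mul_sigma_root5 :
  x * (3 * c * s * x / sqrt (x ^ 2 + s) ^ 5)
  = 3 * (c * s / sqrt (x ^ 2 + s) ^ 3) + -3 * (c * s ^ 2 / sqrt (x ^ 2 + s) ^ 5).
Proof. abstract_root x s. replace s with (r ^ 2 - x ^ 2) by lra. field. lra. Qed.

Hypotheses (hc : 0 <= c) (hs : 0 <= s).

Lemma sigma_root3_le_inv_root : c * s / sqrt (x ^ 2 + s) ^ 3 <= c / sqrt (x ^ 2 + s).
Proof.
  abstract_root x s. apply (Rle_of_sub_eq_div _ _ (c * x ^ 2) (r ^ 3)).
  - apply Rmult_le_pos; [easy | apply pow2_ge_0].
  - now apply pow_lt.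
  - replace s with (r ^ 2 - x ^ 2) by lra. field. lra.
Qed.

Lemma sigma2_root5_le_sigma_root3 : c * s ^ 2 / sqrt (x ^ 2 + s) ^ 5 <= c * s / sqrt (x ^ 2 + s) ^ 3.
Proof.
  abstract_root x s. apply (Rle_of_sub_eq_div _ _ (c * s * x ^ 2) (r ^ 5)).
  - apply Rmult_le_pos; [now apply Rmult_le_pos | apply pow2_ge_0].
  - now apply pow_lt.
  - replace s with (r ^ 2 - x ^ 2) by lra. field. lra.
Qed.

Lemma root_quadratic_bound k :
  2 * k * (c * s / sqrt (x ^ 2 + s) ^ 3) - k ^ 2 * (c / sqrt (x ^ 2 + s))
  <= c * s ^ 2 / sqrt (x ^ 2 + s) ^ 5.
Proof.
  abstract_root x s. apply (Rle_of_sub_eq_div _ _ (c * (s - k * r ^ 2) ^ 2) (r ^ 5)).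
  - apply Rmult_le_pos; [easy | apply pow2_ge_0].
  - now apply pow_lt.
  - field. lra.
Qed.

Lemma root3_nonneg : 0 <= x -> 0 <= c * x / sqrt (x ^ 2 + s) ^ 3.
Proof.
  intros Hx. apply Rdiv_le_0_compat; [now apply Rmult_le_pos|].
  apply pow_lt, sqrt_lt_R0; lra.
Qed.

Lemma inv_root_le_inv : 0 < x -> c / sqrt (x ^ 2 + s) <= c / x.
Proof.
  intros Hx. apply Rdiv_le_contravar; [easy | easy |].
  rewrite <- (sqrt_pow2 x) at 1 by lra. apply sqrt_le_1_alt. lra.
Qed.

Lemma root_lt y : 0 <= x < y -> sqrt (x ^ 2 + s) < sqrt (y ^ 2 + s).
Proof. intros Hxy. apply sqrt_lt_1_alt. nra. Qed.

Lemma inv_root_lt y : 0 < c -> 0 <= x < y -> c / sqrt (y ^ 2 + s) < c / sqrt (x ^ 2 + s).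
Proof.
  intros Hc Hxy. apply Rdiv_lt_contravar; [easy | apply sqrt_lt_R0; lra |]. now apply root_lt.
Qed.

Lemma sigma_root3_le y : 0 <= x < y ->
  c * s / sqrt (y ^ 2 + s) ^ 3 <= c * s / sqrt (x ^ 2 + s) ^ 3.
Proof.
  intros Hxy. apply Rdiv_le_contravar; [now apply Rmult_le_pos | apply pow_lt, sqrt_lt_R0; lra |].
  apply pow_incr. split; [apply sqrt_pos | now apply Rlt_le, root_lt].
Qed.

Lemma sigma_root3_lt y : 0 < c * s -> 0 <= x < y ->
  c * s / sqrt (y ^ 2 + s) ^ 3 < c * s / sqrt (x ^ 2 + s) ^ 3.
Proof.
  intros Hcs Hxy. assert (Hr := root_lt y Hxy). assert (0 < sqrt (x ^ 2 + s)) by (apply sqrt_lt_R0; lra).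
  apply Rdiv_lt_contravar; [easy | now apply pow_lt |].
  set (p := sqrt (x ^ 2 + s)) in *. set (q := sqrt (y ^ 2 + s)) in *.
  assert (p * p < q * q) by nra. simpl. nra.
Qed.
End RootTerms.

Section Phi.
Variables (m : nat) (b sigma : nat -> R).
Hypothesis hm : (1 <= m)%nat.
Hypothesis hb : forall j, (j < m)%nat -> 0 < b j.
Hypothesis hs : forall j, (j < m)%nat -> 0 <= sigma j.

Definition G x := sumR m (fun j => b j / sqrt (x ^ 2 + sigma j)).
Definition S1 x := sumR m (fun j => b j * sigma j / sqrt (x ^ 2 + sigma j) ^ 3).
Definition S2 x := sumR m (fun j => b j * sigma j ^ 2 / sqrt (x ^ 2 + sigma j) ^ 5).
Definition phi3 x := sumR m (fun j => 3 * b j * sigma j * x / sqrt (x ^ 2 + sigma j) ^ 5).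

(* Given [hs], this says [0 < x^2 + sigma_j] for all [j]; in this form it is visibly open. *)
Definition regular x := 0 < x \/ forall j, (j < m)%nat -> 0 < sigma j.

Lemma regular_root_pos x : regular x -> forall j, (j < m)%nat -> 0 < x ^ 2 + sigma j.
Proof.
  intros [Hx|Hs] j Hj.
  - assert (0 < x ^ 2) by now apply pow_lt. specialize (hs j Hj). lra.
  - assert (0 <= x ^ 2) by apply pow2_ge_0. specialize (Hs j Hj). lra.
Qed.

Ltac root_term_hyps := first [now apply regular_root_pos | now apply Rlt_le, hb | now apply hs].

Lemma regular_locally x : regular x -> locally x regular.
Proof.
  intros [Hx|Hs].
  - apply (filter_imp (fun y => 0 < y)); [now left | now apply open_gt].
  - apply filter_forall. now right.
Qed.

Lemma is_derive_phi x : regular x -> is_derive (phi m b sigma) x (x * (1 - G x)).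
Proof.
  intros Hx. unfold phi. replace (x * (1 - G x)) with (x - x * G x) by ring.
  apply (is_derive_minus (fun y => / 2 * y ^ 2)
           (fun y => sumR m (fun j => b j * sqrt (y ^ 2 + sigma j)))).
  - auto_derive; [easy | field].
  - unfold G. rewrite <- sumR_scal.
    apply (is_derive_sumR m (fun j y => b j * sqrt (y ^ 2 + sigma j))).
    intros j Hj. now apply is_derive_scal_root, regular_root_pos.
Qed.

Lemma phi1_eq x : regular x -> phi1 m b sigma x = x * (1 - G x).
Proof. intros Hx. now apply is_derive_unique, is_derive_phi. Qed.

Lemma is_derive_G x : regular x -> is_derive G x (- integrand m b sigma x).
Proof.
  intros Hx. unfold G, integrand. rewrite <- sumR_opp.
  apply (is_derive_sumR m (fun j y => b j / sqrt (y ^ 2 + sigma j))).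
  intros j Hj. now apply is_derive_inv_root, regular_root_pos.
Qed.

Lemma is_derive_phi1 x :
  regular x -> is_derive (phi1 m b sigma) x (1 - G x + x * integrand m b sigma x).
Proof.
  intros Hx.
  apply (is_derive_ext_loc (fun y => y * (1 - G y))).
  { apply (filter_imp regular); [intros y Hy; now rewrite phi1_eq | now apply regular_locally]. }
  replace (1 - G x + x * integrand m b sigma x)
    with (1 * (1 - G x) + x * (0 - - integrand m b sigma x)) by ring.
  apply (is_derive_mult (fun y => y) (fun y => 1 - G y)); [now auto_derive | | apply Rmult_comm].
  apply (is_derive_minus (fun _ => 1) G); [apply (is_derive_const 1) | now apply is_derive_G].
Qed.

Lemma phi2_eq x : regular x -> phi2 m b sigma x = 1 - G x + x * integrand m b sigma x.
Proof. intros Hx. now apply is_derive_unique, is_derive_phi1. Qed.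

Lemma G_sub_integrand x : regular x -> G x - x * integrand m b sigma x = S1 x.
Proof.
  intros Hx. unfold G, integrand, S1, Rminus.
  rewrite <- sumR_scal, <- sumR_opp, <- sumR_plus.
  apply sumR_ext. intros j Hj. now apply inv_root_sub_root3, regular_root_pos.
Qed.

Lemma phi2_S1 x : regular x -> phi2 m b sigma x = 1 - S1 x.
Proof. intros Hx. rewrite phi2_eq, <- G_sub_integrand by easy. ring. Qed.

Lemma is_derive_phi2 x : regular x -> is_derive (phi2 m b sigma) x (phi3 x).
Proof.
  intros Hx.
  apply (is_derive_ext_loc (fun y => 1 - S1 y)).
  { apply (filter_imp regular); [intros y Hy; now rewrite phi2_S1 | now apply regular_locally]. }
  replace (phi3 x) with (0 - - phi3 x) by ring.
  apply (is_derive_minus (fun _ => 1) S1); [apply (is_derive_const 1) |].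
  unfold S1, phi3. rewrite <- sumR_opp.
  apply (is_derive_sumR m (fun j y => b j * sigma j / sqrt (y ^ 2 + sigma j) ^ 3)).
  intros j Hj. now apply is_derive_sigma_root3, regular_root_pos.
Qed.

Lemma mul_phi3 x : regular x -> x * phi3 x = 3 * (S1 x - S2 x).
Proof.
  intros Hx. replace (3 * (S1 x - S2 x)) with (3 * S1 x + -3 * S2 x) by ring.
  unfold phi3, S1, S2. rewrite <- sumR_scal, <- 2!sumR_scal, <- sumR_plus.
  apply sumR_ext. intros j Hj. now apply mul_sigma_root5, regular_root_pos.
Qed.

Lemma RInt_integrand a c :
  (forall x, Rmin a c <= x <= Rmax a c -> regular x) ->
  RInt (integrand m b sigma) a c = G a - G c.
Proof.
  intros Hreg. apply is_RInt_unique.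
  replace (G a - G c) with (minus (- G c) (- G a)) by (unfold minus, plus, opp; simpl; ring).
  apply (is_RInt_derive (fun x => - G x)); intros x Hx.
  - rewrite <- (Ropp_involutive (integrand m b sigma x)).
    now apply (is_derive_opp G), is_derive_G, Hreg.
  - unfold integrand. apply (continuous_sumR m (fun j y => b j * y / sqrt (y ^ 2 + sigma j) ^ 3)).
    intros j Hj. apply (@ex_derive_continuous R_AbsRing R_NormedModule).
    now apply ex_derive_root3, (regular_root_pos x (Hreg x Hx)).
Qed.

Lemma integrand_nonneg x : 0 <= x -> regular x -> 0 <= integrand m b sigma x.
Proof.
  intros Hx0 Hx. apply sumR_nonneg. intros j Hj.
  apply root3_nonneg; root_term_hyps || easy.
Qed.

Lemma G_pos x : regular x -> 0 < G x.
Proof.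
  intros Hx. rewrite <- (sumR_const0 m). apply sumR_lt; [easy|]. intros j Hj.
  apply Rdiv_lt_0_compat; [now apply hb | now apply sqrt_lt_R0, regular_root_pos].
Qed.

Lemma S1_nonneg x : regular x -> 0 <= S1 x.
Proof.
  intros Hx. apply sumR_nonneg. intros j Hj. apply Rdiv_le_0_compat.
  - apply Rmult_le_pos; [now apply Rlt_le, hb | now apply hs].
  - now apply pow_lt, sqrt_lt_R0, regular_root_pos.
Qed.

Lemma S1_le_G x : regular x -> S1 x <= G x.
Proof.
  intros Hx. apply sumR_le. intros j Hj.
  apply sigma_root3_le_inv_root; root_term_hyps.
Qed.

Lemma S2_le_S1 x : regular x -> S2 x <= S1 x.
Proof.
  intros Hx. apply sumR_le. intros j Hj.
  apply sigma2_root5_le_sigma_root3; root_term_hyps.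
Qed.

Lemma S1_sq_le x : regular x -> S1 x ^ 2 <= G x * S2 x.
Proof.
  intros Hx. apply sq_le_of_quadratic_bound; [now apply G_pos |]. intros k.
  unfold S1, G, S2, Rminus. rewrite Ropp_mult_distr_l, <- 2!sumR_scal, <- sumR_plus.
  apply sumR_le. intros j Hj. rewrite <- Ropp_mult_distr_l.
  apply root_quadratic_bound; root_term_hyps.
Qed.

Lemma G_lt x y : 0 < x -> x < y -> G y < G x.
Proof.
  intros Hx Hxy. apply sumR_lt; [easy|]. intros j Hj.
  apply inv_root_lt; [| now apply hb | lra]. apply regular_root_pos; [now left | easy].
Qed.

Lemma S1_lt x y : 0 < x -> x < y -> 0 < S1 x -> S1 y < S1 x.
Proof.
  intros Hx Hxy Hpos. assert (Hreg : regular x) by now left.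
  apply sumR_lt_pos; [| | | easy]; intros j Hj.
  - apply Rdiv_le_0_compat; [apply Rmult_le_pos | apply pow_lt, sqrt_lt_R0]; root_term_hyps.
  - apply sigma_root3_le; try root_term_hyps; lra.
  - intros Hterm. apply sigma_root3_lt; try root_term_hyps; [|lra].
    destruct (hs j Hj) as [Hsj|Hsj].
    + apply Rmult_lt_0_compat; [now apply hb | easy].
    + rewrite <- Hsj, Rmult_0_r in Hterm |- *. unfold Rdiv in Hterm. lra.
Qed.

Lemma G_lt_1_far X : 1 + sumR m b <= X -> G X < 1.
Proof.
  intros HX.
  assert (0 <= sumR m b) by (apply sumR_nonneg; intros j Hj; now apply Rlt_le, hb).
  assert (HG : G X <= sumR m b / X).
  { unfold Rdiv. rewrite Rmult_comm, <- sumR_scal. apply sumR_le. intros j Hj.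
    rewrite Rmult_comm. apply inv_root_le_inv; try root_term_hyps; lra. }
  assert (sumR m b / X < 1); [|lra].
  apply (Rdiv_lt_1 (sumR m b) X); lra.
Qed.

Lemma phi1_pos_eq x : 0 < x -> phi1 m b sigma x = x * (1 - G x).
Proof. intros Hx. apply phi1_eq. now left. Qed.

Lemma G_eq_1_of_phi1_root x : 0 < x -> phi1 m b sigma x = 0 -> G x = 1.
Proof.
  intros Hx Hroot. rewrite phi1_pos_eq in Hroot by easy.
  apply Rmult_integral in Hroot. lra.
Qed.

Lemma continuous_G x : regular x -> continuous G x.
Proof.
  intros Hx. apply (@ex_derive_continuous R_AbsRing R_NormedModule).
  eexists. now apply is_derive_G.
Qed.

Lemma G_lt_1_of_no_root :
  (~ exists l0, 0 < l0 /\ phi1 m b sigma l0 = 0) -> forall x, 0 < x -> G x < 1.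
Proof.
  intros Hno x Hx. apply Rnot_le_lt. intros [Hgt|Heq]; apply Hno.
  - set (X := Rmax (x + 1) (1 + sumR m b)).
    assert (HxX : x < X) by (generalize (Rmax_l (x + 1) (1 + sumR m b)); unfold X; lra).
    assert (HGX : G X < 1) by (apply G_lt_1_far, Rmax_r).
    destruct (Ranalysis5.IVT_interv (fun y => 1 - G y) x X) as [z [Hz HGz]]; [| easy | lra | lra |].
    + intros y Hy. apply continuity_pt_filterlim.
      apply (continuous_minus (fun _ => 1) G); [apply continuous_const |].
      apply continuous_G. left. lra.
    + exists z. split; [lra|]. rewrite phi1_pos_eq by lra. rewrite HGz. ring.
  - exists x. split; [easy|]. rewrite phi1_pos_eq, <- Heq by easy. ring.
Qed.

Lemma sigma_pos_of_G_lt_1 : (forall x, 0 < x -> G x < 1) -> forall j, (j < m)%nat -> 0 < sigma j.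
Proof.
  intros HG j Hj. destruct (hs j Hj) as [|Hsj]; [easy | exfalso].
  assert (Hbj := hb j Hj). set (x := b j / 2). assert (Hx : 0 < x) by (unfold x; lra).
  assert (Hterm : b j / sqrt (x ^ 2 + sigma j) <= G x).
  { apply (sumR_ge_term m (fun j => b j / sqrt (x ^ 2 + sigma j))); [easy |].
    intros k Hk. apply Rdiv_le_0_compat; [now apply Rlt_le, hb |].
    apply sqrt_lt_R0, regular_root_pos; [now left | easy]. }
  rewrite <- Hsj, Rplus_0_r, sqrt_pow2 in Hterm by lra.
  replace (b j / x) with 2 in Hterm by (unfold x; field; lra).
  specialize (HG x Hx). lra.
Qed.

Lemma G0_le_1_of_no_root :
  (~ exists l0, 0 < l0 /\ phi1 m b sigma l0 = 0) -> G 0 <= 1.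
Proof.
  intros Hno. assert (HG := G_lt_1_of_no_root Hno).
  apply continuous_le_at_right.
  - apply continuous_G. right. now apply sigma_pos_of_G_lt_1.
  - intros y Hy. now apply Rlt_le, HG.
Qed.

Lemma phi1_root_unique x y :
  0 < x -> 0 < y -> phi1 m b sigma x = 0 -> phi1 m b sigma y = 0 -> x = y.
Proof.
  intros Hx Hy Hrx Hry.
  apply G_eq_1_of_phi1_root in Hrx, Hry; [|easy|easy].
  destruct (Rtotal_order x y) as [Hxy|[Hxy|Hxy]]; [| easy |].
  - assert (G y < G x) by now apply G_lt. lra.
  - assert (G x < G y) by now apply G_lt. lra.
Qed.

Section Root.
Variable l0 : R.
Hypotheses (hl0 : 0 < l0) (hroot : phi1 m b sigma l0 = 0).

Lemma G_at_root : G l0 = 1.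
Proof. now apply G_eq_1_of_phi1_root. Qed.

Lemma phi1_pos_after_root l : l0 < l -> 0 < phi1 m b sigma l.
Proof.
  intros Hl. assert (G l < G l0) by now apply G_lt.
  rewrite phi1_pos_eq by lra. rewrite G_at_root in *. apply Rmult_lt_0_compat; lra.
Qed.

Lemma phi1_neg_before_root l : 0 < l < l0 -> phi1 m b sigma l < 0.
Proof.
  intros Hl. assert (G l0 < G l) by (apply G_lt; lra).
  rewrite phi1_pos_eq by lra. rewrite G_at_root in *. nra.
Qed.

Lemma phi2_pos_after_root l : l0 < l -> 0 < phi2 m b sigma l.
Proof.
  intros Hl. assert (Hreg : regular l) by (left; lra).
  assert (G l < G l0) by now apply G_lt.
  assert (0 <= integrand m b sigma l) by (apply integrand_nonneg; [lra | easy]).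
  rewrite phi2_eq, G_at_root in * by easy. nra.
Qed.

Lemma phi1_eq_RInt l : 0 < l -> phi1 m b sigma l = l * RInt (integrand m b sigma) l0 l.
Proof.
  intros Hl. rewrite RInt_integrand.
  - rewrite phi1_pos_eq, G_at_root by easy. ring.
  - intros x Hx. left. assert (0 < Rmin l0 l) by now apply Rmin_glb_lt. lra.
Qed.
End Root.

Lemma phi2_root_unique x y :
  0 < x -> 0 < y -> phi2 m b sigma x = 0 -> phi2 m b sigma y = 0 -> x = y.
Proof.
  intros Hx Hy Hrx Hry.
  rewrite phi2_S1 in Hrx, Hry by (left; easy).
  destruct (Rtotal_order x y) as [Hxy|[Hxy|Hxy]]; [| easy |].
  - assert (S1 y < S1 x) by (apply S1_lt; lra). lra.
  - assert (S1 x < S1 y) by (apply S1_lt; lra). lra.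
Qed.

Section NoRoot.
Hypothesis hno : ~ exists l0, 0 < l0 /\ phi1 m b sigma l0 = 0.

Lemma phi2_nonneg_of_no_root l : 0 <= l -> 0 <= phi2 m b sigma l.
Proof.
  intros Hl.
  assert (Hreg : regular l) by (right; now apply sigma_pos_of_G_lt_1, G_lt_1_of_no_root).
  assert (G l <= 1).
  { destruct Hl as [Hl|<-]; [now apply Rlt_le, G_lt_1_of_no_root | now apply G0_le_1_of_no_root]. }
  assert (0 <= l * integrand m b sigma l) by now apply Rmult_le_pos, integrand_nonneg.
  rewrite phi2_eq by easy. lra.
Qed.

Lemma RInt_le_phi1_of_no_root l : 0 < l -> l * RInt (integrand m b sigma) 0 l <= phi1 m b sigma l.
Proof.
  intros Hl. assert (Hpos := sigma_pos_of_G_lt_1 (G_lt_1_of_no_root hno)).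
  rewrite RInt_integrand, phi1_pos_eq by (intros; now right || easy).
  apply Rmult_le_compat_l; [lra|]. assert (HG0 := G0_le_1_of_no_root hno). lra.
Qed.
End NoRoot.

Lemma phi3_mul_phi1_le l : 0 < l -> phi3 l * phi1 m b sigma l <= 3 * phi2 m b sigma l ^ 2.
Proof.
  intros Hl. assert (Hreg : regular l) by now left.
  rewrite phi1_pos_eq, phi2_S1 by easy.
  replace (phi3 l * (l * (1 - G l))) with (3 * ((S1 l - S2 l) * (1 - G l)))
    by (rewrite <- Rmult_assoc, <- mul_phi3 by easy; ring).
  apply Rmult_le_compat_l; [lra|].
  apply sub_mul_one_sub_le_sq.
  - now apply G_pos.
  - split; [now apply S1_nonneg | now apply S1_le_G].
  - now apply S2_le_S1.
  - now apply S1_sq_le.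
Qed.

Lemma Derive_phi2_div_phi1_cube_nonpos l : 0 < l -> phi1 m b sigma l <> 0 ->
  Derive (fun x => phi2 m b sigma x / phi1 m b sigma x ^ 3) l <= 0.
Proof.
  intros Hl Hne. assert (Hreg : regular l) by now left.
  apply (Derive_div_cube_nonpos _ _ (phi3 l));
    [| now apply is_derive_phi2 | easy | now apply phi3_mul_phi1_le].
  rewrite phi2_eq by easy. now apply is_derive_phi1.
Qed.
End Phi.

Theorem lemma6p5 (m : nat) (b sigma : nat -> R)
  (hm : (1 <= m)%nat)
  (hb : forall j, (j < m)%nat -> 0 < b j)
  (hs : forall j, (j < m)%nat -> 0 <= sigma j) :
  (* (1) *)
  ((forall x y, 0 < x -> 0 < y ->
      phi1 m b sigma x = 0 -> phi1 m b sigma y = 0 -> x = y) /\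
   (forall l0, 0 < l0 -> phi1 m b sigma l0 = 0 ->
      (forall l, l0 < l -> 0 < phi1 m b sigma l) /\
      (forall l, 0 < l < l0 -> phi1 m b sigma l < 0) /\
      (forall l, l0 < l -> 0 < phi2 m b sigma l) /\
      (forall x y, 0 < x < l0 -> 0 < y < l0 ->
         phi2 m b sigma x = 0 -> phi2 m b sigma y = 0 -> x = y)) /\
   ((~ exists l0, 0 < l0 /\ phi1 m b sigma l0 = 0) ->
      forall l, 0 <= l -> 0 <= phi2 m b sigma l)) /\
  (* (2) *)
  (forall l, 0 < l -> phi1 m b sigma l <> 0 ->
     Derive (fun x => phi2 m b sigma x / (phi1 m b sigma x) ^ 3) l <= 0) /\
  (* (3) *)
  ((forall l0, 0 < l0 -> phi1 m b sigma l0 = 0 ->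
      forall l, 0 < l ->
        phi1 m b sigma l = l * RInt (integrand m b sigma) l0 l) /\
   ((~ exists l0, 0 < l0 /\ phi1 m b sigma l0 = 0) ->
      forall l, 0 < l ->
        l * RInt (integrand m b sigma) 0 l <= phi1 m b sigma l)).
Proof.
  split; [split; [|split] | split; [|split]].
  - intros x y. now apply phi1_root_unique.
  - intros l0 Hl0 Hroot. repeat split.
    + intros l. now apply phi1_pos_after_root.
    + intros l. now apply phi1_neg_before_root.
    + intros l. now apply phi2_pos_after_root.
    + intros x y Hx Hy. apply phi2_root_unique; tauto.
  - intros Hno l. now apply phi2_nonneg_of_no_root.
  - intros l. now apply Derive_phi2_div_phi1_cube_nonpos.
  - intros l0 Hl0 Hroot l. now apply phi1_eq_RInt.
  - intros Hno l. now apply RInt_le_phi1_of_no_root.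
Qed.
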